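(* Let $k\ge1$, $a>0$, and let $P:\{0,1,\ldots,k\}^2\to\mathbb R$ satisfy $P(0,l)=0$ for all $l\in\{0,\ldots,k\}$, $$-2aP(1,0)=P(j,l)+P(l,j)-a\big(P(j+1,l)-P(j,l)\big)-a\big(P(l+1,j)-P(l,j)\big)\quad\text{for all }(j,l)\in\{0,\ldots,k-1\}^2,$$ $$P(k,0)-aP(1,k)=P(j,k)+P(k,j)-a\big(P(j+1,k)-P(j,k)\big)\quad\text{for all }j\in\{0,\ldots,k-1\}.$$ Then $$P(k,k)=\big((1+1/a)^k-1\big)^2aP(1,0)+\big((1+1/a)^k-1\big)\big(aP(1,k)-P(k,0)\big).$$ *)

From Stdlib Require Import Reals.

(* With x = a/(1+a), the weighted values A j l = x^(j+l) P(j,l) turn the first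
   family of equations into
     (A j l - A (j+1) l) + (A l j - A (l+1) j) = -2 P(1,0) x^(j+l+1).
   Summing over the square {0..k-1}^2, each bracket telescopes along a column
   (A 0 l = 0), which gives sum_j A k j = P(1,0) x (sum_{i<k} x^i)^2.
   The second family, weighted by x^j and summed over j < k, telescopes to an
   expression of P(k,k) in terms of the same row sum, and 1/x = 1 + 1/a. *)

From Stdlib Require Import Reals Lra Lia.
Open Scope R_scope.

Fixpoint rsum (n : nat) (f : nat -> R) : R :=
  match n with O => 0 | S n => rsum n f + f n end.

Lemma rsum_ext n f g :
  (forall i, (i < n)%nat -> f i = g i) -> rsum n f = rsum n g.
Proof.
induction n as [|n IH]; intros Hfg; simpl; [reflexivity|].
rewrite IH by (intros; apply Hfg; lia).
rewrite Hfg by lia; reflexivity.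
Qed.

Lemma rsum_add n f g : rsum n (fun i => f i + g i) = rsum n f + rsum n g.
Proof. induction n as [|n IH]; simpl; [lra | rewrite IH; lra]. Qed.

Lemma rsum_scal n c f : rsum n (fun i => c * f i) = c * rsum n f.
Proof. induction n as [|n IH]; simpl; [lra | rewrite IH; lra]. Qed.

Lemma rsum_telescope n g : rsum n (fun i => g i - g (S i)) = g O - g n.
Proof. induction n as [|n IH]; simpl; [lra | rewrite IH; lra]. Qed.

Lemma rsum_comm n m f :
  rsum n (fun j => rsum m (fun l => f j l)) = rsum m (fun l => rsum n (fun j => f j l)).
Proof.
induction n as [|n IH]; simpl.
- induction m as [|m IHm]; simpl; [lra | rewrite <- IHm; lra].
- rewrite IH, <- rsum_add; reflexivity.
Qed.

Lemma rsum_mul n f g :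
  rsum n (fun j => rsum n (fun l => f j * g l)) = rsum n f * rsum n g.
Proof.
rewrite Rmult_comm, <- rsum_scal.
apply rsum_ext; intros j _.
rewrite Rmult_comm, <- rsum_scal.
apply rsum_ext; intros; ring.
Qed.

Lemma rsum_geom_mul n x : rsum n (fun i => x ^ i) * (1 - x) = 1 - x ^ n.
Proof. induction n as [|n IH]; simpl; [lra | rewrite Rmult_plus_distr_r, IH; lra]. Qed.

Lemma rsum_sym_telescope n (A s : nat -> nat -> R) :
  (forall j, (j < n)%nat -> A O j = 0) ->
  (forall j l, (j < n)%nat -> (l < n)%nat ->
     (A j l - A (S j) l) + (A l j - A (S l) j) = s j l) ->
  2 * rsum n (fun j => A n j) = - rsum n (fun j => rsum n (fun l => s j l)).
Proof.
intros HA0 Hs.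
set (F j l := A j l - A (S j) l).
assert (Hcol : forall j, (j < n)%nat -> rsum n (fun l => F l j) = - A n j).
{ intros j Hj; unfold F; rewrite (rsum_telescope n (fun l => A l j)), HA0 by exact Hj.
  ring. }
assert (Hrows : rsum n (fun j => rsum n (fun l => F l j)) = - rsum n (fun j => A n j)).
{ rewrite (rsum_ext n _ (fun j => -1 * A n j)), (rsum_scal n (-1) (fun j => A n j));
    [ring|].
  intros j Hj; rewrite Hcol by exact Hj; ring. }
assert (Hsplit : rsum n (fun j => rsum n (fun l => s j l))
    = 2 * rsum n (fun j => rsum n (fun l => F l j))).
{ rewrite (rsum_ext n _ (fun j => rsum n (fun l => F j l) + rsum n (fun l => F l j))).
  - rewrite rsum_add, (rsum_comm n n (fun j l => F j l)); ring.
  - intros j Hj; rewrite <- rsum_add.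
    apply rsum_ext; intros l Hl; rewrite <- Hs by assumption; reflexivity. }
rewrite Hsplit, Hrows; ring.
Qed.

Section WeightedSums.

Variables (k : nat) (a : R) (P : nat -> nat -> R).
Hypothesis ha : 0 < a.
Hypothesis h0 : forall l, (l <= k)%nat -> P 0%nat l = 0.
Hypothesis h1 : forall j l, (j < k)%nat -> (l < k)%nat ->
  - 2 * a * P 1%nat 0%nat =
    P j l + P l j - a * (P (S j) l - P j l) - a * (P (S l) j - P l j).
Hypothesis h2 : forall j, (j < k)%nat ->
  P k 0%nat - a * P 1%nat k = P j k + P k j - a * (P (S j) k - P j k).

Let x := a / (1 + a).
Let c := P 1%nat 0%nat.
Let B := P k 0%nat - a * P 1%nat k.
Let G := rsum k (fun i => x ^ i).

Lemma weight_pos : 0 < x.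
Proof. unfold x; apply Rdiv_lt_0_compat; lra. Qed.

Lemma geom_weight : G = (1 - x ^ k) * (1 + a).
Proof.
pose proof (rsum_geom_mul k x) as Hgeom; fold G in Hgeom.
replace (1 - x) with (/ (1 + a)) in Hgeom by (unfold x; field; lra).
rewrite <- Hgeom; field; lra.
Qed.

Lemma row_sum_weighted : rsum k (fun j => x ^ (k + j) * P k j) = c * x * G * G.
Proof.
pose proof (rsum_sym_telescope k (fun j l => x ^ (j + l) * P j l)
  (fun j l => (-2 * c * x * x ^ j) * x ^ l)) as Hdiag.
cbv beta in Hdiag.
rewrite (rsum_mul k (fun j => -2 * c * x * x ^ j) (fun l => x ^ l)),
  (rsum_scal k (-2 * c * x) (fun j => x ^ j)) in Hdiag; fold G in Hdiag.
enough (2 * rsum k (fun j => x ^ (k + j) * P k j) = - (-2 * c * x * G * G)) by lra.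
rewrite Hdiag; [ring| |].
- intros j Hj; rewrite h0 by lia; ring.
- intros j l Hj Hl.
  rewrite (Nat.add_comm l j), !Nat.add_succ_l; simpl pow; rewrite !pow_add.
  replace (-2 * c * x * x ^ j * x ^ l)
    with (x ^ j * x ^ l / (1 + a) * (-2 * a * c)) by (unfold x; field; lra).
  unfold c; rewrite (h1 j l Hj Hl); unfold x; field; lra.
Qed.

Lemma column_sum_weighted :
  (1 + a) * x ^ k * P k k = rsum k (fun j => x ^ j * P k j) - B * G.
Proof.
assert (Hterm : forall j, (j < k)%nat ->
  (1 + a) * (x ^ j * P j k - x ^ S j * P (S j) k) + x ^ j * P k j = B * x ^ j).
{ intros j Hj; unfold B; rewrite (h2 j Hj); simpl; unfold x; field; lra. }
pose proof (rsum_ext k _ _ Hterm) as Hsum.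
rewrite rsum_add, (rsum_scal k (1 + a) (fun j => x ^ j * P j k - x ^ S j * P (S j) k)),
  (rsum_scal k B (fun j => x ^ j)), (rsum_telescope k (fun j => x ^ j * P j k)),
  h0 in Hsum by lia.
fold G in Hsum; simpl in Hsum; lra.
Qed.

Lemma corner_weighted :
  (1 + a) * x ^ k * x ^ k * P k k = c * x * G * G - B * G * x ^ k.
Proof.
rewrite <- row_sum_weighted.
replace (rsum k (fun j => x ^ (k + j) * P k j))
  with (x ^ k * rsum k (fun j => x ^ j * P k j))
  by (rewrite <- rsum_scal; apply rsum_ext; intros; rewrite pow_add; ring).
replace (x ^ k * rsum k (fun j => x ^ j * P k j) - B * G * x ^ k)
  with (x ^ k * (rsum k (fun j => x ^ j * P k j) - B * G)) by ring.
rewrite <- column_sum_weighted; ring.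
Qed.

Lemma corner_value :
  P k k = ((1 + 1 / a) ^ k - 1) ^ 2 * a * c + ((1 + 1 / a) ^ k - 1) * (- B).
Proof.
pose proof weight_pos as Hx.
assert (Hy : 0 < x ^ k) by (apply pow_lt; exact Hx).
replace ((1 + 1 / a) ^ k) with (/ x ^ k)
  by (rewrite <- pow_inv; f_equal; unfold x; field; lra).
assert (Hxa : x * (1 + a) = a) by (unfold x; field; lra).
rewrite <- Hxa at 1.
pose proof corner_weighted as Hcorner.
rewrite geom_weight in Hcorner.
apply Rmult_eq_reg_l with ((1 + a) * x ^ k * x ^ k); [|nra].
rewrite Hcorner; field; lra.
Qed.

End WeightedSums.

Theorem lemma3 (k : nat) (a : R) (P : nat -> nat -> R)
  (hk : (1 <= k)%nat) (ha : 0 < a)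
  (h0 : forall l, (l <= k)%nat -> P 0%nat l = 0)
  (h1 : forall j l, (j < k)%nat -> (l < k)%nat ->
     - 2 * a * P 1%nat 0%nat =
       P j l + P l j - a * (P (S j) l - P j l) - a * (P (S l) j - P l j))
  (h2 : forall j, (j < k)%nat ->
     P k 0%nat - a * P 1%nat k =
       P j k + P k j - a * (P (S j) k - P j k)) :
  P k k = ((1 + 1 / a) ^ k - 1) ^ 2 * a * P 1%nat 0%nat
          + ((1 + 1 / a) ^ k - 1) * (a * P 1%nat k - P k 0%nat).
Proof.
rewrite (corner_value k a P ha h0 h1 h2); ring.
Qed.
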